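(* Let $X$ be a permutation graph, let $\mathfrak{to}(X)$ and $\mathfrak{to}(\overline X)$ be the sets of transitive orientations of $X$ and of its complement $\overline X$, and let $\mathfrak{to}(X,\overline X)=\mathfrak{to}(X)\times\mathfrak{to}(\overline X)$. The action of ${\rm Aut}(X)$ on $\mathfrak{to}(X,\overline X)$, given by $\pi\cdot(\to,\overline{\to})=(\pi(\to),\pi(\overline{\to}))$, is semiregular (every stabilizer is trivial).
   Context: A permutation graph is a graph $X$ such that both $X$ and $\overline X$ are comparability graphs (equivalently, the intersection graph of segments joining two parallel lines). A transitive orientation of a graph is an orientation of its edges which is a transitive relation. For $\pi\in{\rm Aut}(X)$ and a transitive orientation $\to$, the orientation $\pi(\to)$ is defined by: $x\to y$ implies $\pi(x)\,\pi(\to)\,\pi(y)$; note ${\rm Aut}(X)={\rm Aut}(\overline X)$. *)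

(* A finite simple graph is a symmetric irreflexive
   relation e : rel T on a finType T. Orientations are relations o : rel T. *)
From mathcomp Require Import all_boot all_fingroup.
Set Implicit Arguments. Unset Strict Implicit. Unset Printing Implicit Defensive.

Section Defs.
Variable T : finType.

Definition simple_graph (e : rel T) : Prop := symmetric e /\ irreflexive e.

Definition compl_graph (e : rel T) : rel T := fun x y => (x != y) && ~~ e x y.

Definition orientation (e o : rel T) : Prop :=
  [/\ forall x y, o x y -> e x y,
      forall x y, e x y -> o x y || o y x
    & forall x y, o x y -> ~~ o y x].

Definition transitive_orientation (e o : rel T) : Prop :=
  orientation e o /\ transitive o.

Definition comparability_graph (e : rel T) : Prop :=
  exists o, transitive_orientation e o.

Definition permutation_graph (e : rel T) : Prop :=
  simple_graph e /\ comparability_graph e /\ comparability_graph (compl_graph e).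

Definition graph_aut (e : rel T) (p : {perm T}) : Prop :=
  forall x y, e (p x) (p y) = e x y.

(* pi(->): x -> y implies pi x pi(->) pi y *)
Definition perm_orient (p : {perm T}) (o : rel T) : rel T :=
  fun x y => o ((p^-1)%g x) ((p^-1)%g y).

End Defs.

From mathcomp Require Import all_boot all_fingroup.
Set Implicit Arguments. Unset Strict Implicit. Unset Printing Implicit Defensive.

(* Since X and its complement partition the pairs of distinct vertices, the
   union of a transitive orientation of X and one of its complement is a strict
   total order on the vertices.  An automorphism fixing both orientations
   preserves this order, and a finite strict total order is rigid: the rank of
   a vertex (the number of its predecessors) is preserved and strictly
   increasing along the order. *)

Lemma strict_total_order_aut_trivial (T : finType) (L : rel T) (p : {perm T}) :
  irreflexive L -> transitive L -> (forall x y, x != y -> L x y || L y x) ->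
  (forall x y, L (p x) (p y) = L x y) -> p = 1%g.
Proof.
move=> irrL trL totL pL.
pose rank x := #|[set z | L z x]|.
have rank_perm x : rank (p x) = rank x.
  rewrite /rank -(card_preimset _ (@perm_inj _ p)).
  by apply: eq_card => z; rewrite !inE pL.
have rank_mono x y : L x y -> rank x < rank y.
  move=> Lxy; apply: proper_card; apply/properP; split.
    by apply/subsetP => z; rewrite !inE => Lzx; apply: trL Lzx Lxy.
  by exists x; rewrite !inE ?Lxy ?irrL.
apply/permP => x; rewrite perm1; apply/eqP/negPn/negP => px_neq_x.
by case/orP: (totL _ _ px_neq_x) => /rank_mono; rewrite rank_perm ltnn.
Qed.

Lemma perm_orient_fixedE (T : finType) (p : {perm T}) (o : rel T) :
  perm_orient p o =2 o -> forall x y, o (p x) (p y) = o x y.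
Proof. by move=> po x y; rewrite -po /perm_orient !permK. Qed.

Lemma orientation_irreflexive (T : finType) (e o : rel T) :
  orientation e o -> irreflexive o.
Proof. by case=> _ _ asym x; apply/negP => oxx; move: (asym _ _ oxx); rewrite oxx. Qed.

Section Complementary.
Variable T : finType.

Definition complementary (e1 e2 : rel T) : Prop :=
  [/\ symmetric e1, symmetric e2, forall x y, e1 x y -> ~~ e2 x y
    & forall x y, x != y -> e1 x y || e2 x y].

Lemma complementary_sym (e1 e2 : rel T) :
  complementary e1 e2 -> complementary e2 e1.
Proof.
case=> s1 s2 disj cover; split=> // x y; first exact: contraL (disj x y).
by rewrite orbC; apply: cover.
Qed.

Lemma complementary_compl (e : rel T) :
  symmetric e -> complementary e (compl_graph e).
Proof.
move=> sym; split=> // x y; rewrite /compl_graph.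
- by rewrite eq_sym sym.
- by move=> ->; rewrite andbF.
- by move=> ->; case: (e x y).
Qed.

Lemma transitive_orientation_trans_compl (e1 e2 o1 o2 : rel T) :
  complementary e1 e2 ->
  transitive_orientation e1 o1 -> transitive_orientation e2 o2 ->
  forall x y z, o1 x y -> o2 y z -> o1 x z || o2 x z.
Proof.
case=> _ s2 disj cover [[o1e1 e1o1 _] tr1] [[o2e2 e2o2 _] tr2] x y z o1xy o2yz.
have e1xy := o1e1 _ _ o1xy; have e2yz := o2e2 _ _ o2yz.
have neq_xz : x != z.
  by apply: contraTneq e2yz => <-; rewrite s2; apply: disj.
case/orP: (cover _ _ neq_xz) => [/e1o1|/e2o2] /orP[-> // | ozx]; rewrite ?orbT //.
- by move: (disj _ _ (o1e1 _ _ (tr1 _ _ _ ozx o1xy))); rewrite s2 e2yz.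
- by move: (disj _ _ e1xy); rewrite s2 (o2e2 _ _ (tr2 _ _ _ o2yz ozx)).
Qed.

Variables (e1 e2 o1 o2 : rel T).
Hypotheses (e12 : complementary e1 e2)
  (to1 : transitive_orientation e1 o1) (to2 : transitive_orientation e2 o2).

Let L : rel T := fun x y => o1 x y || o2 x y.

Lemma orientation_union_irreflexive : irreflexive L.
Proof.
by move=> x; rewrite /L (orientation_irreflexive to1.1) (orientation_irreflexive to2.1).
Qed.

Lemma orientation_union_trans : transitive L.
Proof.
have [[_ _ _] tr1] := to1; have [[_ _ _] tr2] := to2.
move=> y x z /orP[oxy|oxy] /orP[oyz|oyz].
- by rewrite /L (tr1 _ _ _ oxy oyz).
- exact: transitive_orientation_trans_compl e12 to1 to2 _ _ _ oxy oyz.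
- by rewrite /L orbC; apply: (transitive_orientation_trans_compl
    (complementary_sym e12) to2 to1 oxy oyz).
- by rewrite /L (tr2 _ _ _ oxy oyz) orbT.
Qed.

Lemma orientation_union_total x y : x != y -> L x y || L y x.
Proof.
have [_ _ _ cover] := e12; have [[_ e1o1 _] _] := to1; have [[_ e2o2 _] _] := to2.
by rewrite /L => /cover /orP[/e1o1|/e2o2] /orP[] ->; rewrite ?orbT.
Qed.

End Complementary.

Theorem mainTheorem5 (T : finType) (e : rel T) :
  permutation_graph e ->
  forall (p : {perm T}), graph_aut e p ->
  forall (o ob : rel T),
    transitive_orientation e o ->
    transitive_orientation (compl_graph e) ob ->
    perm_orient p o =2 o ->
    perm_orient p ob =2 ob ->
    p = 1%g.
Proof.
move=> [[sym _] _] p _ o ob to tob po pob.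
have ecompl := complementary_compl sym.
apply: (@strict_total_order_aut_trivial _ (fun x y => o x y || ob x y)).
- exact: orientation_union_irreflexive to tob.
- exact: orientation_union_trans ecompl to tob.
- exact: orientation_union_total ecompl to tob.
- by move=> x y; rewrite (perm_orient_fixedE po) (perm_orient_fixedE pob).
Qed.
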